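(* Let $f_1,\dots,f_k\in\mathbb{K}[\mathbf{x}]$ be nonzero multihomogeneous polynomials, $<$ a monomial order, and $\mathbf{d}\in\mathbb{Z}^r$ such that $[H_1^k]_{\mathbf{d}}=0$. Then, in the matrix $\mathrm{M_3H}(\{f_1,\dots,f_k\},\mathbf{d},<)$, every row of the form $\mathbf{x}^\beta\cdot f_k$ is linearly independent of the other rows (it is not a linear combination of them).
   Context: $\mathbb{K}$ is a field of characteristic $0$; $\mathbb{K}[\mathbf{x}]$ is the polynomial ring in variables $x_{i,0},\dots,x_{i,n_i}$ ($1\le i\le r$), $\mathbb{Z}^r$-graded with $x_{i,j}$ of degree the $i$-th standard basis vector; $[\,\cdot\,]_{\mathbf{d}}$ denotes multidegree-$\mathbf{d}$ parts (zero if $\mathbf{d}$ has a negative coordinate). $H_1^k:=H_1(\mathcal{K}_\bullet(f_1,\dots,f_k;\mathbb{K}[\mathbf{x}]))$ is the first homology of the Koszul complex of $f_1,\dots,f_k$ over $\mathbb{K}[\mathbf{x}]$, with its multigrading. A Macaulay matrix has columns indexed by monomials and rows representing polynomials (entry = coefficient). The procedure $\mathrm{M_3H}(\{f_1,\dots,f_k\},\mathbf{d},<)$ returns a Macaulay matrix with columns the monomials of $\mathbb{K}[\mathbf{x}]_{\mathbf{d}}$ in decreasing order for $<$, defined recursively: if $k=1$, start from the empty matrix and $\mathfrak{L}=\emptyset$; if $k>1$, start from $\mathrm{M_3H}(\{f_1,\dots,f_{k-1}\},\mathbf{d},<)$ and let $\mathfrak{L}$ be the set of leading monomials of the nonzero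 rows of the Gaussian elimination of $\mathrm{M_3H}(\{f_1,\dots,f_{k-1}\},\mathbf{d}-\deg(f_k),<)$. Then append the row $\mathbf{x}^\beta f_k$ for every monomial $\mathbf{x}^\beta\in\mathbb{K}[\mathbf{x}]_{\mathbf{d}-\deg(f_k)}\setminus\mathfrak{L}$. *)

From HB Require Import structures.
From mathcomp Require Import all_boot all_order all_algebra.
From mathcomp Require Import mpoly.
From Stdlib Require Import ClassicalEpsilon.

Set Implicit Arguments.
Unset Strict Implicit.
Unset Printing Implicit Defensive.

Import Order.TTheory GRing.Theory Num.Theory.
Local Open Scope ring_scope.

Section M3H.

(* K : the coefficient field; N : total number of variables;
   r : number of blocks; blk v : the block i to which variable v = x_{i,j}
   belongs.  The Z^r-grading gives x_v degree e_(blk v). *)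
Variables (K : fieldType) (N r : nat) (blk : 'I_N -> 'I_r).

Definition mdegv (m : 'X_{1..N}) : 'I_r -> int :=
  fun i => (\sum_(v < N | blk v == i) m v)%N%:Z.

(* p lies in K[x]_e (the zero polynomial lies in every K[x]_e, including
   when e has a negative coordinate, where K[x]_e = 0) *)
Definition mhomog (e : 'I_r -> int) (p : {mpoly K[N]}) : Prop :=
  forall m, m \in msupp p -> forall i, mdegv m i = e i.

Definition pdeg (p : {mpoly K[N]}) : 'I_r -> int := mdegv (mlead p).

Definition subv (d e : 'I_r -> int) : 'I_r -> int := fun i => d i - e i.

Definition monos (e : 'I_r -> int) : seq 'X_{1..N} :=
  [seq val m | m <- enum {: bmultinom N (\sum_(i < r) `|e i|).+1}
             & [forall i, mdegv (val m) i == e i]].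

Definition monomial_order (lt : rel 'X_{1..N}) : Prop :=
  [/\ irreflexive lt,
      transitive lt,
      (forall a b, a != b -> lt a b || lt b a),
      (forall a b c, lt a b -> lt (a + c)%MM (b + c)%MM) &
      (forall a, a != 0%MM -> lt 0%MM a)].

Definition is_LM (lt : rel 'X_{1..N}) (p : {mpoly K[N]}) (m : 'X_{1..N}) :=
  m \in msupp p /\ forall m', m' \in msupp p -> m' != m -> lt m' m.

Definition in_span (rows : seq {mpoly K[N]}) (p : {mpoly K[N]}) : Prop :=
  exists c : 'I_(size rows) -> K, p = \sum_(j < size rows) c j *: rows`_j.

(* Leading monomials of the nonzero rows of a Gaussian elimination
   (row echelon form) of the matrix with rows [rows]: these are exactly the
   leading monomials of the nonzero polynomials of the row space. *)
Definition LMset (lt : rel 'X_{1..N}) (rows : seq {mpoly K[N]})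
  (m : 'X_{1..N}) : Prop :=
  exists p, [/\ in_span rows p, p != 0 & is_LM lt p m].

Definition decide (P : Prop) : bool :=
  if excluded_middle_informative P then true else false.

(* M3H(fs, d, <) as the list of its rows (each row = a polynomial of
   K[x]_d, its coefficient vector on the monomial columns of K[x]_d).
   Recursion on the last polynomial: M3H(rcons fs f) =
   M3H(fs) followed by the rows x^b f, for x^b in K[x]_(d - deg f) \ L,
   L = leading monomials of the Gaussian elimination of M3H(fs, d - deg f). *)
Fixpoint M3H_rev (lt : rel 'X_{1..N}) (rfs : seq {mpoly K[N]})
  (d : 'I_r -> int) {struct rfs} : seq {mpoly K[N]} :=
  match rfs with
  | [::] => [::]
  | f :: rfs' =>
      M3H_rev lt rfs' d ++
      [seq 'X_[b] * f | b <- monos (subv d (pdeg f)) &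
         ~~ decide (LMset lt (M3H_rev lt rfs' (subv d (pdeg f))) b)]
  end.

Definition M3H (fs : seq {mpoly K[N]}) (d : 'I_r -> int) (lt : rel 'X_{1..N})
  : seq {mpoly K[N]} := M3H_rev lt (rev fs) d.

(* [H_1(K(f_1..f_k))]_d = 0: every syzygy (g_1..g_k), g_i in
   K[x]_(d - deg f_i), with sum g_i f_i = 0, is a Koszul syzygy, i.e. in the
   image of K_2 -> K_1, e_i /\ e_j |-> f_i e_j - f_j e_i. *)
Definition H1_vanishes (fs : seq {mpoly K[N]}) (d : 'I_r -> int) : Prop :=
  forall g : 'I_(size fs) -> {mpoly K[N]},
    (forall i : 'I_(size fs), mhomog (subv d (pdeg fs`_i)) (g i)) ->
    \sum_(i < size fs) g i * fs`_i = 0 ->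
    exists h : 'I_(size fs) -> 'I_(size fs) -> {mpoly K[N]},
      [/\ forall i, h i i = 0,
          forall i j, h i j = - h j i &
          forall j, g j = \sum_(i < size fs) h i j * fs`_i].

Definition row_indep_of_others (rows : seq {mpoly K[N]}) (i : nat) : Prop :=
  ~ exists c : 'I_(size rows) -> K,
      rows`_i = \sum_(j < size rows | val j != i) c j *: rows`_j.

End M3H.

(* The rows of M3H(f_1, ..., f_k; d) span the degree-d part of the ideal
   (f_1, ..., f_k): a row x^b f_i is omitted only when x^b is the leading
   monomial of some p in the span of the earlier rows in degree d - deg f_i,
   and then x^b f_i = p f_i / lc(p) + (x^b - p / lc(p)) f_i, where the first
   term lies in the span by induction on i and the second by induction on x^b
   along the monomial order.
   If a row x^beta f_k were a combination of the other rows, we would get a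
   nonzero g, supported on the monomials kept for f_k, with g f_k in
   [(f_1, ..., f_(k-1))]_d.  Since [H_1]_d = 0 this syzygy is Koszul, so g lies
   in [(f_1, ..., f_(k-1))]_(d - deg f_k), i.e. in the row span of
   M3H(f_1, ..., f_(k-1); d - deg f_k); its leading monomial would then have
   been omitted. *)

From HB Require Import structures.
From mathcomp Require Import all_boot all_order all_algebra.
From mathcomp Require Import mpoly.
From Stdlib Require Import ClassicalEpsilon.
Import GRing.Theory.
Local Open Scope ring_scope.

Set Implicit Arguments.
Unset Strict Implicit.
Unset Printing Implicit Defensive.

Lemma decideP (P : Prop) : reflect P (decide P).
Proof.
by rewrite /decide; case: excluded_middle_informative => h; constructor.
Qed.

Lemma big_ord_rcons (V : nmodType) (T : Type) (s : seq T) x (F : nat -> V) :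
  \sum_(j < size (rcons s x)) F j = \sum_(j < size s) F j + F (size s).
Proof. by rewrite -!(big_mkord xpredT) size_rcons big_nat_recr. Qed.

Section Span.
Variables (R : pzRingType) (V : lmodType R).
Implicit Types (rows : seq V) (p x y : V).

(* [in_span] with coefficients indexed by [nat], which makes spans of
   concatenated row lists easy to compare. *)
Definition spanned rows p :=
  exists c : nat -> R, p = \sum_(j < size rows) c j *: rows`_j.

Lemma spanned_ind (P : V -> Prop) rows p :
  P 0 -> (forall x y, P x -> P y -> P (x + y)) ->
  (forall a x, P x -> P (a *: x)) -> {in rows, forall x, P x} ->
  spanned rows p -> P p.
Proof.
move=> P0 PD PZ Prows [c ->]; elim/big_ind: _ => // j _.
by apply/PZ/Prows/mem_nth.
Qed.

Lemma spanned0 rows : spanned rows 0.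
Proof. by exists (fun=> 0); rewrite big1 // => j _; rewrite scale0r. Qed.

Lemma spannedD rows p q :
  spanned rows p -> spanned rows q -> spanned rows (p + q).
Proof.
move=> [c1 ->] [c2 ->]; exists (fun j => c1 j + c2 j).
by rewrite -big_split; apply: eq_bigr => j _; rewrite scalerDl.
Qed.

Lemma spannedZ rows a p : spanned rows p -> spanned rows (a *: p).
Proof.
move=> [c ->]; exists (fun j => a * c j).
by rewrite scaler_sumr; apply: eq_bigr => j _; rewrite scalerA.
Qed.

Lemma spanned_sum rows (I : Type) (s : seq I) (P : pred I) (F : I -> V) :
  (forall i, P i -> spanned rows (F i)) -> spanned rows (\sum_(i <- s | P i) F i).
Proof.
by move=> H; elim/big_ind: _ => //; [apply: spanned0 | apply: spannedD].
Qed.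

Lemma mem_spanned rows x : x \in rows -> spanned rows x.
Proof.
move=> xin; exists (fun j => (j == index x rows)%:R).
have ix : (index x rows < size rows)%N by rewrite index_mem.
rewrite (bigD1 (Ordinal ix)) //= eqxx scale1r nth_index // big1 ?addr0 // => j.
by rewrite -val_eqE /= => /negbTE ->; rewrite scale0r.
Qed.

Lemma spanned_catl rows rows' p : spanned rows p -> spanned (rows ++ rows') p.
Proof.
move=> [c ->]; exists (fun j => if (j < size rows)%N then c j else 0).
rewrite size_cat big_split_ord /= [X in _ = _ + X]big1 ?addr0 => [|j _].
  by apply: eq_bigr => j _; rewrite ltn_ord nth_cat ltn_ord.
by rewrite ltnNge leq_addr scale0r.
Qed.

Lemma spanned_catr rows rows' p : spanned rows' p -> spanned (rows ++ rows') p.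
Proof.
move=> [c ->].
exists (fun j => if (j < size rows)%N then 0 else c (j - size rows)%N).
rewrite size_cat big_split_ord /= [X in _ = X + _]big1 ?add0r => [|j _].
  apply: eq_bigr => j _.
  by rewrite ltnNge leq_addr nth_cat ltnNge leq_addr /= addKn.
by rewrite ltn_ord scale0r.
Qed.

Lemma spanned_others_cat rows rows' t (c : 'I_(size (rows ++ rows')) -> R) :
  (rows ++ rows')`_(size rows + t) =
    \sum_(j < size (rows ++ rows') | val j != (size rows + t)%N)
      c j *: (rows ++ rows')`_j ->
  exists c' : nat -> R, exists2 a, spanned rows a &
    rows'`_t = a + \sum_(j < size rows' | val j != t) c' j *: rows'`_j.
Proof.
pose c' n := if insub n is Some j then c j else 0.
rewrite (eq_bigr (fun j : 'I_(size (rows ++ rows')) =>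
  c' j *: (rows ++ rows')`_j)); last by move=> j _; rewrite /c' valK.
rewrite nth_cat ltnNge leq_addr addKn size_cat big_split_ord /= => ->.
exists (fun j => c' (size rows + j)); eexists; last first.
  congr (_ + _); apply: eq_big => [j|j _]; first by rewrite eqn_add2l.
  by rewrite nth_cat ltnNge leq_addr addKn.
apply: spanned_sum => j _; rewrite nth_cat ltn_ord.
exact/spannedZ/mem_spanned/mem_nth.
Qed.

End Span.

Lemma in_spanP (K : fieldType) (N : nat) (rows : seq {mpoly K[N]}) p :
  in_span rows p <-> spanned rows p.
Proof.
split=> [[c ->]|[c ->]]; last by exists (fun j => c j).
exists (fun n => if insub n is Some j then c j else 0).
by apply: eq_bigr => j _; rewrite valK.
Qed.

Section StrictOrder.
Variables (T : eqType) (lt : rel T).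
Hypotheses (lt_irr : irreflexive lt) (lt_trans : transitive lt).
Hypothesis lt_total : forall a b, a != b -> lt a b || lt b a.

Lemma sub_count_lt (P Q : pred T) (s : seq T) x :
  subpred P Q -> x \in s -> Q x -> ~~ P x -> (count P s < count Q s)%N.
Proof.
move=> PQ; elim: s => //= y s IH; rewrite inE => /orP[/eqP <-|xs] Qx nPx.
  by rewrite (negbTE nPx) Qx add0n add1n ltnS; apply: sub_count.
rewrite -addnS; apply: leq_add; last exact: IH.
by case: (P y) (PQ y) => // ->.
Qed.

Lemma strict_ind_in (s : seq T) (P : T -> Prop) :
  (forall x, x \in s -> (forall y, y \in s -> lt y x -> P y) -> P x) ->
  forall x, x \in s -> P x.
Proof.
move=> IH x; move: {2}(count (lt^~ x) s).+1 (ltnSn (count (lt^~ x) s)) => n.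
elim: n x => // n IHn x cx xs; apply: IH => // y ys yx; apply: IHn => //.
rewrite -ltnS (leq_trans _ cx) // ltnS.
apply: (sub_count_lt (x := y)) => //= [z zy|].
  exact: lt_trans yx.
by rewrite lt_irr.
Qed.

Lemma exists_max_in (s : seq T) : s != [::] ->
  exists2 x, x \in s & forall y, y \in s -> y != x -> lt y x.
Proof.
elim: s => // x s IH _; case: (eqVneq s [::]) => [-> | /IH [m ms mmax]].
  by exists x => [|y]; rewrite ?mem_head // inE => /eqP ->; rewrite eqxx.
have [xm | mx] := boolP ((x == m) || lt x m).
  exists m => [|y]; first by rewrite inE ms orbT.
  rewrite inE => /orP[/eqP -> | /mmax //].
  by case/orP: xm => [/eqP -> | //]; rewrite eqxx.
have lmx : lt m x.
  by move: mx; rewrite negb_or => /andP[/lt_total/orP[->|] // _].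
exists x => [|y]; first exact: mem_head.
rewrite inE => /orP[/eqP -> | ys]; first by rewrite eqxx.
by case: (eqVneq y m) => [-> // | /(mmax _ ys) ym _]; apply: lt_trans lmx.
Qed.

End StrictOrder.

Section Multigrading.
Variables (K : fieldType) (N r : nat) (blk : 'I_N -> 'I_r).
Local Notation poly := {mpoly K[N]}.
Implicit Types (e : 'I_r -> int) (p q : poly) (m : 'X_{1..N}).

Lemma mdegvD m1 m2 i : mdegv blk (m1 + m2)%MM i = mdegv blk m1 i + mdegv blk m2 i.
Proof.
rewrite /mdegv -PoszD -big_split /=; congr Posz.
by apply: eq_bigr => v _; rewrite mnmDE.
Qed.

Lemma mhomog0 e : mhomog blk e (0 : poly).
Proof. by move=> m; rewrite msupp0. Qed.

Lemma mhomogD e p q : mhomog blk e p -> mhomog blk e q -> mhomog blk e (p + q).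
Proof. by move=> hp hq m /msuppD_le; rewrite mem_cat => /orP[/hp|/hq]. Qed.

Lemma mhomogZ e c p : mhomog blk e p -> mhomog blk e (c *: p).
Proof. by move=> hp m /msuppZ_le /hp. Qed.

Lemma mhomogB e p q : mhomog blk e p -> mhomog blk e q -> mhomog blk e (p - q).
Proof. by move=> hp hq; rewrite -scaleN1r; apply/mhomogD/mhomogZ. Qed.

Lemma mhomog_sum e (I : Type) (s : seq I) (P : pred I) (F : I -> poly) :
  (forall i, P i -> mhomog blk e (F i)) -> mhomog blk e (\sum_(i <- s | P i) F i).
Proof. by move=> H; elim/big_ind: _ => //; [apply: mhomog0 | apply: mhomogD]. Qed.

Lemma mhomogX e m :
  (forall i, mdegv blk m i = e i) -> mhomog blk e ('X_[m] : poly).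
Proof. by move=> H m'; rewrite msuppX inE => /eqP ->. Qed.

Lemma mhomogM e e1 e2 p q : mhomog blk e1 p -> mhomog blk e2 q ->
  (forall i, e i = e1 i + e2 i) -> mhomog blk e (p * q).
Proof.
move=> hp hq he m /msuppM_le /allpairsP [[m1 m2] [/= h1 h2 ->]] i.
by rewrite mdegvD (hp _ h1) (hq _ h2) he.
Qed.

Lemma mhomog_pdeg e p : p != 0 -> mhomog blk e p -> mhomog blk (pdeg blk p) p.
Proof.
by move=> p0 hp m hm i; rewrite (hp _ hm) /pdeg (hp _ (mlead_supp p0)).
Qed.

Lemma monosP e m : reflect (forall i, mdegv blk m i = e i) (m \in monos blk e).
Proof.
apply: (iffP idP) => [/mapP [bm] | H].
  by rewrite mem_filter => /andP[/forallP H _] -> i; apply/eqP.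
have hb : (mdeg m < (\sum_(i < r) `|e i|).+1)%N.
  rewrite ltnS mdegE (partition_big blk xpredT) //= leq_eqVlt; apply/orP; left.
  by apply/eqP/eq_bigr => i _; rewrite -H.
apply/mapP; exists (BMultinom hb) => //.
by rewrite mem_filter mem_enum andbT; apply/forallP => i; rewrite H.
Qed.

Lemma uniq_monos e : uniq (monos blk e).
Proof. by rewrite (map_inj_uniq val_inj) filter_uniq // enum_uniq. Qed.

Lemma mhomog_supp_monos e p : mhomog blk e p -> {subset msupp p <= monos blk e}.
Proof. by move=> hp m /hp /monosP. Qed.

Definition avoids_deg e p :=
  forall m, (forall i, mdegv blk m i = e i) -> p@_m = 0.

Lemma avoids_deg_sum e (I : Type) (s : seq I) (P : pred I) (F : I -> poly) :
  (forall i, P i -> avoids_deg e (F i)) -> avoids_deg e (\sum_(i <- s | P i) F i).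
Proof.
move=> H m hm; rewrite raddf_sum big1 // => i /H; exact.
Qed.

Lemma avoids_degM e e1 e2 p q : avoids_deg e1 p -> mhomog blk e2 q ->
  (forall i, e i = e1 i + e2 i) -> avoids_deg e (p * q).
Proof.
move=> hp hq he m hm; apply/eqP; rewrite mcoeff_eq0; apply/negP.
move=> /msuppM_le /allpairsP [[m1 m2] [/= h1 h2 Em]].
move: h1; rewrite mcoeff_msupp hp ?eqxx // => i.
by have := hm i; rewrite Em mdegvD (hq _ h2) he => /addIr.
Qed.

Lemma mhomog_avoids_deg e p : mhomog blk e p -> avoids_deg e p -> p = 0.
Proof.
move=> hp ha; apply/eqP; rewrite -msupp_eq0; case E: (msupp p) => [//|m s].
have mp : m \in msupp p by rewrite E mem_head.
by move: (mp); rewrite mcoeff_msupp ha ?eqxx // => i; apply: hp.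
Qed.

Definition deg_part e p := \sum_(m <- monos blk e) p@_m *: 'X_[m].

Lemma mhomog_deg_part e p : mhomog blk e (deg_part e p).
Proof.
rewrite /deg_part big_seq; apply/mhomog_sum => m /monosP hm.
exact/mhomogZ/mhomogX.
Qed.

Lemma avoids_deg_sub_deg_part e p : avoids_deg e (p - deg_part e p).
Proof.
move=> m /monosP hm.
rewrite mcoeffB /deg_part raddf_sum (bigD1_seq m) ?uniq_monos //=.
rewrite mcoeffZ mcoeffX eqxx mulr1 big1 ?addr0 ?subrr // => m' nm'.
by rewrite mcoeffZ mcoeffX (negbTE nm') mulr0.
Qed.

End Multigrading.

Section HomogeneousIdeal.
Variables (K : fieldType) (N r : nat) (blk : 'I_N -> 'I_r).
Local Notation poly := {mpoly K[N]}.
Implicit Types (e : 'I_r -> int) (f g p : poly) (fs : seq poly).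

Definition homog_seq fs := forall f, f \in fs -> mhomog blk (pdeg blk f) f.

Definition in_ideal_deg fs e p := exists h : nat -> poly,
  (forall l, (l < size fs)%N -> mhomog blk (subv e (pdeg blk fs`_l)) (h l)) /\
  p = \sum_(l < size fs) h l * fs`_l.

Lemma in_ideal_deg_homog fs e g (k : nat -> poly) : homog_seq fs ->
  mhomog blk e g -> g = \sum_(l < size fs) k l * fs`_l -> in_ideal_deg fs e g.
Proof.
move=> fsH gH gE; pose P l := deg_part blk (subv e (pdeg blk fs`_l)) (k l).
have degE l i : e i = subv e (pdeg blk fs`_l) i + pdeg blk fs`_l i.
  by rewrite /subv subrK.
have fH l : (l < size fs)%N -> mhomog blk (pdeg blk fs`_l) fs`_l.
  by move=> ls; apply/fsH/mem_nth.
exists P; split=> [l _|]; first exact: mhomog_deg_part.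
rewrite {}/P.
apply/eqP; rewrite -subr_eq0; apply/eqP/(@mhomog_avoids_deg _ _ _ blk e).
  apply: mhomogB gH _; apply: mhomog_sum => l _.
  by apply: (mhomogM _ (fH l (ltn_ord l)) (degE l)); apply: mhomog_deg_part.
rewrite gE -sumrB; apply: avoids_deg_sum => l _; rewrite -mulrBl.
exact: avoids_degM (avoids_deg_sub_deg_part _) (fH l (ltn_ord l)) (degE l).
Qed.

(* The vanishing of [H_1]_d is used on the syzygy (h_1, ..., h_(k-1), -g) of
   (f_1, ..., f_k): its last component is then a combination of f_1, ..., f_(k-1)
   because the Koszul coefficient h_kk vanishes. *)
Lemma koszul_lift fs fk d g : H1_vanishes blk (rcons fs fk) d ->
  mhomog blk (subv d (pdeg blk fk)) g -> in_ideal_deg fs d (g * fk) ->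
  exists k : nat -> poly, g = \sum_(l < size fs) k l * fs`_l.
Proof.
move=> H1 gH [h [hH ghE]]; set s := rcons fs fk.
have sE l : (l < size fs)%N -> s`_l = fs`_l by move=> ls; rewrite nth_rcons ls.
have sk : s`_(size fs) = fk by rewrite nth_rcons ltnn eqxx.
pose G l := if (l < size fs)%N then h l else - g.
have [||h2 [h2d _ h2E]] := H1 (fun j => G j).
- move=> j; rewrite /G; case: ltnP => [js | sj].
    by rewrite sE //; apply: hH.
  have -> : val j = size fs.
    by apply/eqP; rewrite eqn_leq sj -ltnS -(size_rcons fs fk) ltn_ord.
  by rewrite sk -scaleN1r; apply: mhomogZ.
- rewrite (big_ord_rcons _ _ (fun l => G l * s`_l)).
  have -> : \sum_(l < size fs) G l * s`_l = g * fk.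
    by rewrite ghE; apply: eq_bigr => l _; rewrite /G ltn_ord sE.
  by rewrite /G ltnn sk mulNr subrr.
have ks : (size fs < size s)%N by rewrite size_rcons.
exists (fun l => - h2 (insubd (Ordinal ks) l) (Ordinal ks)).
have := h2E (Ordinal ks); rewrite /G ltnn => /(canRL (@opprK _)) ->.
rewrite (eq_bigr (fun j : 'I_(size s) =>
  h2 (insubd (Ordinal ks) (val j)) (Ordinal ks) * s`_j)).
  rewrite (big_ord_rcons _ _ (fun l => h2 (insubd (Ordinal ks) l) _ * s`_l)).
  rewrite (valKd _ (Ordinal ks)) h2d mul0r addr0 -sumrN.
  by apply: eq_bigr => l _; rewrite sE // mulNr.
by move=> j _; rewrite valKd.
Qed.

End HomogeneousIdeal.

Section MacaulayRows.
Variables (K : fieldType) (N r : nat) (blk : 'I_N -> 'I_r).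
Variable lt : rel 'X_{1..N}.
Hypothesis lt_mo : monomial_order lt.
Local Notation poly := {mpoly K[N]}.
Local Notation M := (M3H_rev blk lt).
Implicit Types (e : 'I_r -> int) (f g h p : poly) (fs rfs : seq poly).

Lemma exists_LM p : p != 0 -> exists m, is_LM lt p m.
Proof.
case: lt_mo => _ lt_trans lt_total _ _ p0.
have [|m mp mmax] := exists_max_in lt_trans lt_total (s := msupp p).
  by rewrite msupp_eq0.
by exists m.
Qed.

Lemma mem_M3H_rev rfs e x : x \in M rfs e -> exists g b,
  [/\ g \in rfs, b \in monos blk (subv e (pdeg blk g)) & x = 'X_[b] * g].
Proof.
elim: rfs e => [|f rfs IH] e //=; rewrite mem_cat => /orP[/IH|/mapP [b]].
  by move=> [g [b [gr hb ->]]]; exists g, b; rewrite inE gr orbT.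
by rewrite mem_filter => /andP[_ hb] ->; exists f, b; rewrite mem_head.
Qed.

Lemma spanned_M3H_rev_homog rfs e p : homog_seq blk rfs ->
  spanned (M rfs e) p -> mhomog blk e p.
Proof.
move=> rfsH; apply: spanned_ind; [exact: mhomog0 | exact: mhomogD | |].
  by move=> a x; apply: mhomogZ.
move=> x /mem_M3H_rev [g [b [gr /monosP hb ->]]].
by apply: (mhomogM (mhomogX hb) (rfsH g gr)) => i; rewrite /subv subrK.
Qed.

Lemma spanned_mul_supp (rows : seq poly) f h :
  (forall m, m \in msupp h -> spanned rows ('X_[m] * f)) -> spanned rows (h * f).
Proof.
move=> H; rewrite (mpolyE h) mulr_suml big_seq; apply: spanned_sum => m hm.
by rewrite -scalerAl; apply/spannedZ/H.
Qed.

Definition spans_ideal rfs := forall e f h, f \in rfs ->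
  mhomog blk (subv e (pdeg blk f)) h -> spanned (M rfs e) (h * f).

Lemma spanned_M3H_rev_mul rfs e f p : spans_ideal rfs ->
  mhomog blk (pdeg blk f) f -> spanned (M rfs (subv e (pdeg blk f))) p ->
  spanned (M rfs e) (p * f).
Proof.
move=> rfsI fH; apply: (spanned_ind (P := fun x => spanned (M rfs e) (x * f))).
- by rewrite mul0r; apply: spanned0.
- by move=> x y hx hy; rewrite mulrDl; apply: spannedD.
- by move=> a x hx; rewrite -scalerAl; apply: spannedZ.
move=> x /mem_M3H_rev [g [b [gr /monosP hb ->]]].
rewrite mulrAC; apply: rfsI => //.
by apply: (mhomogM (mhomogX hb) fH) => i; rewrite /subv addrAC subrK.
Qed.

Lemma spans_ideal_cons f rfs : homog_seq blk rfs -> mhomog blk (pdeg blk f) f ->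
  spans_ideal rfs -> spans_ideal (f :: rfs).
Proof.
case: lt_mo => lt_irr lt_trans _ _ _ rfsH fH rfsI e g h.
rewrite inE; have [grfs _ hH | _] := boolP (g \in rfs).
  by apply/spanned_catl/rfsI.
rewrite orbF => /eqP -> {g} /mhomog_supp_monos hmonos; apply: spanned_mul_supp.
move=> m {}/hmonos; set e' := subv e (pdeg blk f); move: m.
apply: (strict_ind_in lt_irr lt_trans) => m hm IHm /=.
have [[p [/in_spanP pS p0 [pm pmax]]] | notLM] :=
  decideP (LMset lt (M rfs e') m); last first.
  apply/spanned_catr/mem_spanned/mapP; exists m => //.
  by rewrite mem_filter hm andbT; apply/negP => /decideP.
have c0 : p@_m != 0 by rewrite -mcoeff_msupp.
set q := 'X_[m] - (p@_m)^-1 *: p.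
have -> : 'X_[m] * f = (p@_m)^-1 *: (p * f) + q * f.
  by rewrite mulrBl -scalerAl addrC subrK.
apply: spannedD; first exact/spannedZ/spanned_catl/spanned_M3H_rev_mul.
have qH : mhomog blk e' q.
  apply: mhomogB; first exact/mhomogX/monosP.
  exact/mhomogZ/(spanned_M3H_rev_homog rfsH).
apply: spanned_mul_supp => m' m'q; apply: IHm; first exact: mhomog_supp_monos m'q.
have m'm : m' != m.
  by apply: contraTneq m'q => ->; rewrite mcoeff_msupp mcoeffB mcoeffX eqxx
    mcoeffZ mulVf // subrr eqxx.
move/msuppB_le: m'q; rewrite mem_cat msuppX inE (negbTE m'm) /=.
by move/msuppZ_le/pmax; apply.
Qed.

Lemma M3H_rev_spans_ideal rfs : homog_seq blk rfs -> spans_ideal rfs.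
Proof.
elim: rfs => [_ e f h //|f rfs IH rfsH].
apply: spans_ideal_cons; [| apply: rfsH (mem_head _ _) | apply: IH];
  by move=> g gr; apply: rfsH; rewrite inE gr orbT.
Qed.

Lemma in_ideal_deg_spanned fs e p : homog_seq blk fs ->
  in_ideal_deg blk fs e p -> spanned (M3H blk fs e lt) p.
Proof.
move=> fsH [h [hH ->]]; apply: spanned_sum => l _.
apply: (M3H_rev_spans_ideal _) (hH l (ltn_ord l)).
  by move=> f; rewrite mem_rev; apply: fsH.
by rewrite mem_rev mem_nth.
Qed.

Lemma spanned_in_ideal_deg fs e p :
  spanned (M3H blk fs e lt) p -> in_ideal_deg blk fs e p.
Proof.
apply: spanned_ind.
- exists (fun=> 0); split=> [l _|]; first exact: mhomog0.
  by rewrite big1 // => l _; rewrite mul0r.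
- move=> x y [hx [hxH ->]] [hy [hyH ->]]; exists (fun l => hx l + hy l).
  split=> [l ls|]; first exact: mhomogD (hxH l ls) (hyH l ls).
  by rewrite -big_split; apply: eq_bigr => l _; rewrite mulrDl.
- move=> a x [hx [hxH ->]]; exists (fun l => a *: hx l).
  split=> [l ls|]; first exact: mhomogZ (hxH l ls).
  by rewrite scaler_sumr; apply: eq_bigr => l _; rewrite scalerAl.
move=> x /mem_M3H_rev [g [b [+ hb ->]]]; rewrite mem_rev => gfs.
have gi : (index g fs < size fs)%N by rewrite index_mem.
exists (fun l => if l == index g fs then 'X_[b] else 0); split=> [l _|].
  case: eqP => [->|_]; last exact: mhomog0.
  by apply/mhomogX/monosP; rewrite nth_index.
rewrite (bigD1 (Ordinal gi)) //= eqxx nth_index // big1 ?addr0 // => l.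
by rewrite -val_eqE /= => /negbTE ->; rewrite mul0r.
Qed.

End MacaulayRows.

Lemma X_sub_sum_X_supp (K : fieldType) (N : nat) (B : seq 'X_{1..N}) t
    (c : nat -> K) (g : {mpoly K[N]}) : uniq B -> (t < size B)%N ->
  g = 'X_[nth 0%MM B t] -
      \sum_(j < size B | val j != t) c j *: 'X_[nth 0%MM B j] ->
  g != 0 /\ {subset msupp g <= B}.
Proof.
set G := \sum_(j < _ | _) _ => Bu tB ->.
have Gcoef m : (m \notin B) || (m == nth 0%MM B t) -> G@_m = 0.
  move=> mB; rewrite raddf_sum big1 // => j jt /=; rewrite mcoeffZ mcoeffX.
  case/orP: mB => [mB | /eqP ->]; last by rewrite nth_uniq // (negbTE jt) mulr0.
  by rewrite (negbTE (memPn mB _ (mem_nth _ (ltn_ord j)))) mulr0.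
split.
  apply/eqP => /(congr1 (mcoeff (nth 0%MM B t))).
  rewrite mcoeffB mcoeffX eqxx Gcoef ?eqxx ?orbT // subr0 mcoeff0.
  by move=> /eqP; rewrite oner_eq0.
move=> m; rewrite mcoeff_msupp; apply: contraR => mB.
rewrite mcoeffB mcoeffX Gcoef ?mB // subr0.
by rewrite (negbTE (memPn mB _ (mem_nth _ tB))).
Qed.

Section KeptRows.
Variables (K : fieldType) (N r : nat) (blk : 'I_N -> 'I_r).
Variable lt : rel 'X_{1..N}.
Hypothesis lt_mo : monomial_order lt.
Local Notation poly := {mpoly K[N]}.
Variables (fs : seq poly) (fk : poly) (d : 'I_r -> int).
Hypotheses (fsH : homog_seq blk (rcons fs fk))
  (H1 : H1_vanishes blk (rcons fs fk) d).

Local Notation e := (subv d (pdeg blk fk)).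

Definition kept_monos :=
  [seq b <- monos blk e | ~~ decide (LMset lt (M3H blk fs e lt) b)].

Lemma M3H_rcons : M3H blk (rcons fs fk) d lt =
  M3H blk fs d lt ++ [seq 'X_[b] * fk | b <- kept_monos].
Proof. by rewrite /M3H rev_rcons. Qed.

Lemma kept_monos_free g : g != 0 -> {subset msupp g <= kept_monos} ->
  ~ spanned (M3H blk fs d lt) (g * fk).
Proof.
move=> g0 gB /spanned_in_ideal_deg gI.
have gH : mhomog blk e g by move=> m /gB; rewrite mem_filter => /andP[_ /monosP].
have fs'H : homog_seq blk fs.
  by move=> f ffs; apply: fsH; rewrite mem_rcons inE ffs orbT.
have [k gE] := koszul_lift H1 gH gI.
have /in_spanP gS :=
  in_ideal_deg_spanned lt_mo fs'H (in_ideal_deg_homog fs'H gH gE).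
have [m mLM] := exists_LM lt_mo g0.
have := gB m mLM.1; rewrite mem_filter => /andP[/decideP []].
by exists g.
Qed.

Lemma M3H_rcons_row_indep i :
  (size (M3H blk fs d lt) <= i < size (M3H blk (rcons fs fk) d lt))%N ->
  row_indep_of_others (M3H blk (rcons fs fk) d lt) i.
Proof.
rewrite M3H_rcons size_cat => /andP[iA iT] [c].
rewrite -(subnKC iA); set t := (i - _)%N; set A := M3H _ _ _ _.
move=> /spanned_others_cat [c' [a aS]].
have tB : (t < size kept_monos)%N.
  by rewrite -(size_map (fun b => 'X_[b] * fk)) -(ltn_add2l (size A)) subnKC.
set G := \sum_(j < size kept_monos | val j != t)
  c' j *: 'X_[nth 0%MM kept_monos j].
have -> : \sum_(j < size [seq 'X_[b] * fk | b <- kept_monos] | val j != t)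
    c' j *: [seq 'X_[b] * fk | b <- kept_monos]`_j = G * fk.
  rewrite size_map mulr_suml; apply: eq_bigr => j _.
  by rewrite (nth_map 0%MM) // -scalerAl.
rewrite (nth_map 0%MM) // => /eqP; rewrite -subr_eq -mulrBl => /eqP aE.
have Bu : uniq kept_monos by rewrite filter_uniq ?uniq_monos.
set g := 'X_[nth 0%MM kept_monos t] - G in aE.
have [g0 gB] := X_sub_sum_X_supp Bu tB (erefl g).
by apply: kept_monos_free g0 gB _; rewrite aE.
Qed.

End KeptRows.

Theorem mainTheorem17
  (K : fieldType) (charK0 : [pchar K] =i pred0)
  (N r : nat) (blk : 'I_N -> 'I_r) (blk_surj : forall i : 'I_r, exists v, blk v = i)
  (fs : seq {mpoly K[N]}) (fk : {mpoly K[N]})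
  (fs_ok : forall f, f \in rcons fs fk ->
             f != 0 /\ exists D : 'I_r -> int, mhomog blk D f)
  (lt : rel 'X_{1..N}) (lt_mo : monomial_order lt)
  (d : 'I_r -> int)
  (H1 : H1_vanishes blk (rcons fs fk) d) :
  forall i : nat,
    (size (M3H blk fs d lt) <= i < size (M3H blk (rcons fs fk) d lt))%N ->
    row_indep_of_others (M3H blk (rcons fs fk) d lt) i.
Proof.
apply: M3H_rcons_row_indep => // f /fs_ok [f0 [D fD]].
exact: mhomog_pdeg fD.
Qed.
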